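(* Fix $r\ge2$ and $\epsilon>0$. For all sufficiently large $k$ the following holds: if a coloring of $[1,M_\epsilon]$ produced by the random scheme in the context (i.e., any outcome of it) has no bad $t$-term arithmetic progression with common difference greater than $b$, then every monochromatic $\lfloor k/2\rfloor$-term ascending wave $w_1<\dots<w_{\lfloor k/2\rfloor}$ in $[1,M_\epsilon]$ satisfies $w_{\lfloor k/2\rfloor}-w_{\lfloor k/2\rfloor-1}\geq b\,k^{1-\epsilon/2}$.
   Context: Ascending wave: positive integers $w_1<\dots<w_n$ with $w_{i+1}-w_i\ge w_i-w_{i-1}$ for $2\le i\le n-1$; $AW(k;r)$ is the least $N$ such that every $r$-coloring of $\{1,\dots,N\}$ has a monochromatic $k$-term ascending wave. Non-integer quantities used as integers are rounded down; $\log=\log_2$. Fix $r\ge2$, $\epsilon>0$, and $k$. Let $K=\lfloor k/(10(4r-4))\rfloor$, $b=AW(K;r-1)-1$, and $M_\epsilon=\lfloor k^{2r-1-\epsilon}/(2^{r-1}(40r)^{r^2-1})\rfloor$. For each $i\in\{0,\dots,r-1\}$ fix a coloring $\gamma_i$ of $\{1,\dots,b\}$ with colors from $\{0,\dots,r-1\}\setminus\{i\}$ having no monochromatic $K$-term ascending wave. Let $A$ be the $r^2\times 2r$ matrix with rows indexed by pairs $(j,i)$, $j\in\{0,\dots,r-1\}$, $i\in\{1,\dots,r\}$, whose row $(j,i)$ has entry $(m+j)\bmod r$ in position $2m+1$ and entry $(i+m-1+j)\bmod r$ in position $2m+2$, for $m=0,\dots,r-1$. Partition $[1,M_\epsilon]$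 into consecutive blocks $B_1,B_2,\dots$ of $b$ integers each (the last possibly partial), and group the blocks into consecutive groups of $2r$ blocks. For each group independently, choose a row $(s_1,\dots,s_{2r})$ of $A$ uniformly at random, give the $l$-th block of the group the label $s_l$, and color it by $\gamma_{s_l}$ (translated to that block). An arithmetic progression $x_1<\dots<x_t$ is good if for every $c\in\{0,\dots,r-1\}$ there is a term $x_i$ lying in a block $B_j$ such that $B_j$ and $B_{j+1}$ both have label $c$; otherwise it is bad. Here $t=\frac{(4r-2)(2r+1)}{\log(r^2/(r^2-1))}\log k+\frac{(2r+1)(\log r+1)}{\log(r^2/(r^2-1))}$. *)

From Stdlib Require Export Reals Arith Lia.
Open Scope R_scope.

(* floor of a real, as a natural number (the real quantities used here are >= 0) *)
Definition nfloor (x : R) : nat := Z.to_nat (Int_part x).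

Definition log2 (x : R) : R := ln x / ln 2.

Definition is_wave (n : nat) (w : nat -> nat) : Prop :=
  (forall i, (i < n)%nat -> (1 <= w i)%nat) /\
  (forall i, (i + 1 < n)%nat -> (w i < w (i + 1))%nat) /\
  (forall i, (i + 2 < n)%nat -> (w (i + 1) - w i <= w (i + 2) - w (i + 1))%nat).

Definition has_mono_wave (c : nat -> nat) (N n : nat) : Prop :=
  exists w : nat -> nat, is_wave n w /\
    (forall i, (i < n)%nat -> (w i <= N)%nat) /\
    exists col, forall i, (i < n)%nat -> c (w i) = col.

Definition AW_prop (K s N : nat) : Prop :=
  forall c : nat -> nat, (forall x, (1 <= x <= N)%nat -> (c x < s)%nat) ->
    has_mono_wave c N K.

Definition is_AW (K s N : nat) : Prop :=
  AW_prop K s N /\ forall M, AW_prop K s M -> (N <= M)%nat.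

Definition K_of (r k : nat) : nat := (k / (10 * (4 * r - 4)))%nat.

Definition M_eps (r : nat) (eps : R) (k : nat) : nat :=
  nfloor (Rpower (INR k) (2 * INR r - 1 - eps) /
          (2 ^ (r - 1) * (40 * INR r) ^ (r * r - 1))).

Definition t_len (r k : nat) : nat :=
  let L := log2 (INR r ^ 2 / (INR r ^ 2 - 1)) in
  nfloor ((4 * INR r - 2) * (2 * INR r + 1) / L * log2 (INR k)
          + (2 * INR r + 1) * (log2 (INR r) + 1) / L).

(* Entry at 0-based position p (= 1-based position p+1) of row (j,i) of A:
   position 2m+1 holds (m+j) mod r, position 2m+2 holds (i+m-1+j) mod r. *)
Definition A_entry (r j i p : nat) : nat :=
  if Nat.even p then ((p / 2 + j) mod r)%nat
  else ((i + p / 2 - 1 + j) mod r)%nat.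

(* blocks are 0-indexed: block q (= B_{q+1}) is {q*b+1, ..., q*b+b} *)
Definition block (b x : nat) : nat := ((x - 1) / b)%nat.

(* label of block q: group q/(2r) chose row sel g = (j,i), and q is at
   0-based position q mod (2r) of its group *)
Definition label (r : nat) (sel : nat -> nat * nat) (q : nat) : nat :=
  A_entry r (fst (sel (q / (2 * r))%nat)) (snd (sel (q / (2 * r))%nat)) (q mod (2 * r)).

Definition colour (r b : nat) (gam : nat -> nat -> nat) (sel : nat -> nat * nat)
  (x : nat) : nat :=
  gam (label r sel (block b x)) (x - block b x * b)%nat.

Definition good_AP (r b M : nat) (sel : nat -> nat * nat) (t a d : nat) : Prop :=
  forall c, (c < r)%nat -> exists s, (s < t)%nat /\
    let q := block b (a + s * d) in
    label r sel q = c /\ label r sel (q + 1) = c /\ ((q + 1) * b + 1 <= M)%nat.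

From Stdlib Require Import Reals Arith Lia Lra.

(* Let c be the colour of the wave. No point of colour c lies in a block
   labelled c (gamma_c avoids c), and no block holds K consecutive terms of the
   wave (gamma_i has no monochromatic K-term wave). Since the label c recurs
   within every 4r - 2 consecutive blocks, the wave cannot advance block by
   block for (4r - 2)(K - 1) steps, so some early gap exceeds b. From then on,
   the t-term progression starting at a wave term with the current gap as
   difference is good, hence meets two consecutive blocks labelled c; the wave
   would stay within b above it unless its gaps grow, so every t - 1 steps the
   gap grows by more than b/(t - 1). Over the remaining ~ k/2 terms the last gap
   becomes ~ b k / t^2, and t = O(log k). *)

Open Scope nat_scope.

Lemma block_bounds b x : 1 <= b -> 1 <= x ->
  block b x * b + 1 <= x <= block b x * b + b.
Proof.
  intros Hb Hx. unfold block.
  pose proof (Nat.div_mod (x - 1) b ltac:(lia)).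
  pose proof (Nat.mod_upper_bound (x - 1) b ltac:(lia)).
  lia.
Qed.

Lemma block_le b x y : x <= y -> block b x <= block b y.
Proof. intros. unfold block. apply Nat.Div0.div_le_mono. lia. Qed.

Lemma block_step b y x : 1 <= b -> 1 <= y -> y <= x <= y + b ->
  block b x = block b y \/ block b x = S (block b y).
Proof.
  intros Hb Hy Hx.
  pose proof (block_bounds b y Hb Hy). pose proof (block_bounds b x Hb ltac:(lia)).
  pose proof (block_le b y x ltac:(lia)).
  assert (block b x <= S (block b y)).
  { destruct (Nat.le_gt_cases (block b x) (S (block b y))) as [h|h]; [exact h|].
    assert (S (S (block b y)) * b <= block b x * b) by (apply Nat.mul_le_mono_r; lia).
    nia. }
  lia.
Qed.

Lemma label_lt r sel q : 1 <= r -> label r sel q < r.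
Proof.
  intros. unfold label, A_entry. destruct Nat.even; apply Nat.mod_upper_bound; lia.
Qed.

(* Position [2m] of the next group carries label [(m + j) mod r]; solve for [m]. *)
Lemma label_recurs r sel q0 c : 2 <= r -> (forall g, fst (sel g) < r) -> c < r ->
  exists q, q0 <= q <= q0 + 4 * r - 2 /\ label r sel q = c.
Proof.
  intros Hr Hsel Hc.
  set (g := S (q0 / (2 * r))).
  set (j := fst (sel g)).
  set (m := (c + r - j) mod r).
  assert (Hj : j < r) by apply Hsel.
  assert (Hm : m < r) by (apply Nat.mod_upper_bound; lia).
  pose proof (Nat.div_mod q0 (2 * r) ltac:(lia)).
  pose proof (Nat.mod_upper_bound q0 (2 * r) ltac:(lia)).
  exists (g * (2 * r) + 2 * m). split.
  - unfold g. nia.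
  - unfold label.
    assert (Eg : (g * (2 * r) + 2 * m) / (2 * r) = g).
    { rewrite Nat.div_add_l by lia. rewrite Nat.div_small by lia. lia. }
    assert (Epos : (g * (2 * r) + 2 * m) mod (2 * r) = 2 * m).
    { rewrite Nat.add_comm, Nat.Div0.mod_add. apply Nat.mod_small. lia. }
    rewrite Eg, Epos. fold j. unfold A_entry.
    replace (Nat.even (2 * m)) with true by (rewrite Nat.even_mul; reflexivity).
    replace (2 * m / 2) with m by (rewrite Nat.mul_comm, Nat.div_mul; lia).
    unfold m. rewrite Nat.Div0.add_mod_idemp_l.
    replace (c + r - j + j) with (c + 1 * r) by lia.
    rewrite Nat.Div0.mod_add. apply Nat.mod_small; lia.
Qed.

Definition gap (w : nat -> nat) (l : nat) : nat := w (l + 1) - w l.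

Lemma wave_le n w l l' : is_wave n w -> l <= l' -> l' < n -> w l <= w l'.
Proof.
  intros [_ [Hinc _]] Hl. induction Hl; intros; [lia|].
  specialize (IHHl ltac:(lia)). specialize (Hinc m ltac:(lia)).
  replace (S m) with (m + 1) by lia. lia.
Qed.

Lemma wave_gap_le n w l l' : is_wave n w -> l <= l' -> l' + 1 < n ->
  gap w l <= gap w l'.
Proof.
  intros [_ [_ Hconv]] Hl. unfold gap. induction Hl; intros; [lia|].
  specialize (IHHl ltac:(lia)). specialize (Hconv m ltac:(lia)).
  replace (S m) with (m + 1) by lia. replace (m + 1 + 1) with (m + 2) by lia. lia.
Qed.

Lemma wave_succ n w l : is_wave n w -> l + 1 < n -> w (l + 1) = w l + gap w l.
Proof. intros [_ [Hinc _]] Hl. specialize (Hinc l Hl). unfold gap. lia. Qed.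

Lemma wave_between n w i s m : is_wave n w -> s <= m -> i + m + 1 < n ->
  w i + s * gap w i <= w (i + s) <= w i + s * gap w (i + m).
Proof.
  intros Hw Hs Hm. induction s as [|s IH].
  - rewrite !Nat.mul_0_l, !Nat.add_0_r. lia.
  - specialize (IH ltac:(lia)).
    pose proof (wave_gap_le n w i (i + s) Hw ltac:(lia) ltac:(lia)).
    pose proof (wave_gap_le n w (i + s) (i + m) Hw ltac:(lia) ltac:(lia)).
    replace (i + S s) with (i + s + 1) by lia.
    rewrite (wave_succ n w (i + s) Hw), !Nat.mul_succ_l by lia. lia.
Qed.

Section MonochromaticWave.

Variables (r b K : nat) (gam : nat -> nat -> nat) (sel : nat -> nat * nat).
Hypothesis r_ge2 : 2 <= r.
Hypothesis b_pos : 1 <= b.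
Hypothesis gam_ok : forall i, i < r ->
  (forall x, 1 <= x <= b -> gam i x < r /\ gam i x <> i) /\ ~ has_mono_wave (gam i) b K.
Hypothesis sel_ok : forall g, fst (sel g) < r.

Lemma colour_lt x : 1 <= x -> colour r b gam sel x < r.
Proof.
  intros Hx. pose proof (block_bounds b x b_pos Hx).
  apply (gam_ok _ (label_lt r sel _ ltac:(lia))). lia.
Qed.

Lemma colour_neq_label x : 1 <= x -> colour r b gam sel x <> label r sel (block b x).
Proof.
  intros Hx. pose proof (block_bounds b x b_pos Hx).
  apply (gam_ok _ (label_lt r sel _ ltac:(lia))). lia.
Qed.

Variables (n : nat) (w : nat -> nat).
Hypothesis w_wave : is_wave n w.
Hypothesis w_monochromatic : forall i, i < n -> colour r b gam sel (w i) = colour r b gam sel (w 0).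

Lemma w_pos i : i < n -> 1 <= w i.
Proof. apply w_wave. Qed.

Lemma wave_label_neq j : j < n -> label r sel (block b (w j)) <> colour r b gam sel (w 0).
Proof.
  intros Hj E. apply (colour_neq_label (w j) (w_pos j Hj)). rewrite E. auto.
Qed.

Lemma wave_leaves_block j : 1 <= K -> j + K - 1 < n ->
  block b (w j) < block b (w (j + K - 1)).
Proof.
  intros HK Hj.
  destruct (Nat.lt_ge_cases (block b (w j)) (block b (w (j + K - 1)))) as [h|h]; [exact h|].
  exfalso. set (q := block b (w j)).
  assert (Hq : forall i, i < K -> block b (w (j + i)) = q).
  { intros i Hi.
    pose proof (block_le b _ _ (wave_le n w j (j + i) w_wave ltac:(lia) ltac:(lia))).
    pose proof (block_le b _ _ (wave_le n w (j + i) (j + K - 1) w_wave ltac:(lia) ltac:(lia))).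
    unfold q in *. lia. }
  assert (Hin : forall i, i < K -> q * b + 1 <= w (j + i) <= q * b + b).
  { intros i Hi. rewrite <- (Hq i Hi). apply block_bounds; [exact b_pos|apply w_pos; lia]. }
  destruct w_wave as [_ [Hinc Hconv]].
  apply (gam_ok _ (label_lt r sel q ltac:(lia))).
  exists (fun i => w (j + i) - q * b). split; [split; [|split]|split].
  - intros i Hi. specialize (Hin i Hi). lia.
  - intros i Hi. pose proof (Hin i ltac:(lia)). specialize (Hinc (j + i) ltac:(lia)).
    replace (j + (i + 1)) with (j + i + 1) by lia. lia.
  - intros i Hi. pose proof (Hin i ltac:(lia)).
    pose proof (Hinc (j + i) ltac:(lia)). specialize (Hconv (j + i) ltac:(lia)).
    replace (j + (i + 1)) with (j + i + 1) by lia.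
    replace (j + (i + 2)) with (j + i + 2) by lia.
    replace (j + i + 1 + 1) with (j + i + 2) in * by lia. lia.
  - intros i Hi. specialize (Hin i Hi). lia.
  - exists (colour r b gam sel (w 0)). intros i Hi.
    rewrite <- (w_monochromatic (j + i)) by lia. unfold colour. rewrite Hq by lia. reflexivity.
Qed.

Lemma wave_block_progress p : 1 <= K -> p * (K - 1) < n ->
  block b (w 0) + p <= block b (w (p * (K - 1))).
Proof.
  intros HK. induction p as [|p IH]; intros Hp.
  - simpl. lia.
  - replace (S p * (K - 1)) with (p * (K - 1) + K - 1) in * by nia.
    pose proof (wave_leaves_block (p * (K - 1)) HK Hp).
    specialize (IH ltac:(lia)). lia.
Qed.

Lemma exists_large_gap : 1 <= K -> (4 * r - 2) * (K - 1) < n ->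
  exists J, J < (4 * r - 2) * (K - 1) /\ b < gap w J.
Proof.
  intros HK Hn.
  set (c := colour r b gam sel (w 0)).
  assert (Hc : c < r) by (apply colour_lt, w_pos; nia).
  destruct (label_recurs r sel (block b (w 0)) c r_ge2 sel_ok Hc) as [qc [Hqc Lqc]].
  assert (below : forall j, j <= (4 * r - 2) * (K - 1) ->
            (exists J, J < j /\ b < gap w J) \/ block b (w j) < qc).
  { induction j as [|j IH]; intros Hj.
    - right. assert (block b (w 0) <> qc) by (intros E; apply (wave_label_neq 0); [lia|rewrite E; auto]).
      lia.
    - destruct (IH ltac:(lia)) as [[J HJ]|Hlt]; [left; exists J; lia|].
      destruct (Nat.le_gt_cases (gap w j) b) as [Hsmall|Hbig]; [|left; exists j; lia].
      right. replace (S j) with (j + 1) by lia.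
      pose proof (wave_succ n w j w_wave ltac:(lia)).
      assert (block b (w (j + 1)) <> qc)
        by (intros E; apply (wave_label_neq (j + 1)); [lia|rewrite E; auto]).
      destruct (block_step b (w j) (w (j + 1)) b_pos (w_pos j ltac:(lia)) ltac:(lia)); lia. }
  destruct (below ((4 * r - 2) * (K - 1)) ltac:(lia)) as [[J HJ]|Hlt]; [exists J; exact HJ|].
  pose proof (wave_block_progress (4 * r - 2) HK Hn). lia.
Qed.

Variables (t M : nat).
Hypothesis w_le_M : forall i, i < n -> w i <= M.
Hypothesis AP_good : forall a d, 1 <= a -> b < d -> a + (t - 1) * d <= M ->
  good_AP r b M sel t a d.

Lemma AP_length_ge2 : 0 < n -> 2 <= t.
Proof.
  intros Hn. destruct (Nat.le_gt_cases 2 t) as [h|h]; [exact h|exfalso].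
  assert (Hc : colour r b gam sel (w 0) < r) by (apply colour_lt, w_pos; lia).
  destruct (AP_good (w 0) (b + 1) (w_pos 0 Hn) ltac:(lia))
    with (c := colour r b gam sel (w 0)) as [s [Hs [L _]]]; [|exact Hc|].
  - replace (t - 1) with 0 by lia. rewrite Nat.add_0_r. apply w_le_M, Hn.
  - replace (s * (b + 1)) with 0 in L by nia. rewrite Nat.add_0_r in L.
    exact (wave_label_neq 0 Hn L).
Qed.

(* The good progression from [w i] with difference [gap w i] meets two consecutive
   blocks labelled by the wave's colour, and the wave stays within
   [(t-1) (gap w (i+t-1) - gap w i)] above it. *)
Lemma gap_spread i : b < gap w i -> i + (t - 1) + 1 < n ->
  b < (t - 1) * (gap w (i + (t - 1)) - gap w i).
Proof.
  intros Hgi Hi.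
  destruct (Nat.le_gt_cases ((t - 1) * (gap w (i + (t - 1)) - gap w i)) b) as [Hsmall|]; [exfalso|assumption].
  set (c := colour r b gam sel (w 0)).
  assert (Hc : c < r) by (apply colour_lt, w_pos; lia).
  assert (HM : w i + (t - 1) * gap w i <= M).
  { pose proof (wave_between n w i (t - 1) (t - 1) w_wave (le_n _) Hi).
    pose proof (w_le_M (i + (t - 1)) ltac:(lia)). lia. }
  destruct (AP_good (w i) (gap w i) (w_pos i ltac:(lia)) Hgi HM c Hc)
    as [s [Hs [L1 [L2 _]]]].
  destruct (wave_between n w i s (t - 1) w_wave ltac:(lia) Hi) as [Lo Hi'].
  pose proof (wave_gap_le n w i (i + (t - 1)) w_wave ltac:(lia) ltac:(lia)).
  assert (s * (gap w (i + (t - 1)) - gap w i) <= (t - 1) * (gap w (i + (t - 1)) - gap w i))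
    by (apply Nat.mul_le_mono_r; lia).
  rewrite Nat.mul_sub_distr_l in *.
  assert (s * gap w i <= s * gap w (i + (t - 1))) by (apply Nat.mul_le_mono_l; lia).
  pose proof (w_pos i ltac:(lia)).
  destruct (block_step b (w i + s * gap w i) (w (i + s)) b_pos ltac:(lia) ltac:(lia)) as [E|E];
    apply (wave_label_neq (i + s)); try lia; rewrite E; [exact L1|rewrite <- Nat.add_1_r; exact L2].
Qed.

Lemma gap_grows_iter J p : b < gap w J -> J + p * (t - 1) + 1 < n ->
  (t - 1) * gap w J + p * (b + 1) <= (t - 1) * gap w (J + p * (t - 1)).
Proof.
  intros HJ. induction p as [|p IH]; intros Hp.
  - rewrite !Nat.mul_0_l, !Nat.add_0_r. lia.
  - pose proof (gap_spread (J + p * (t - 1))) as Hspread.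
    set (u := t - 1) in *. set (i := J + p * u) in *.
    replace (J + S p * u) with (i + u) in * by (unfold i; lia).
    specialize (IH ltac:(lia)).
    assert (Hbig : b < gap w i).
    { pose proof (wave_gap_le n w J i w_wave ltac:(lia) ltac:(lia)). lia. }
    specialize (Hspread Hbig ltac:(lia)).
    pose proof (wave_gap_le n w i (i + u) w_wave ltac:(lia) ltac:(lia)).
    rewrite Nat.mul_sub_distr_l in Hspread. simpl. lia.
Qed.

Lemma last_gap_bound J : b < gap w J -> J + 1 < n ->
  (n - 1 - J) * b <= (t - 1) * (t - 1) * (w (n - 1) - w (n - 2)) + (t - 1) * b.
Proof.
  intros HJ Hn.
  assert (Ht : 1 <= t - 1) by (pose proof AP_length_ge2 ltac:(lia); lia).
  set (u := t - 1) in *.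
  set (P := (n - 2 - J) / u).
  pose proof (Nat.div_mod (n - 2 - J) u ltac:(lia)) as Hdiv.
  pose proof (Nat.mod_upper_bound (n - 2 - J) u ltac:(lia)) as Hmod.
  fold P in Hdiv.
  assert (HP : P * u <= n - 2 - J) by nia.
  assert (Hcount : n - 1 - J <= (P + 1) * u) by nia.
  pose proof (gap_grows_iter J P HJ ltac:(lia)) as Hgrow. fold u in Hgrow.
  pose proof (wave_gap_le n w (J + P * u) (n - 2) w_wave ltac:(lia) ltac:(lia)).
  replace (gap w (n - 2)) with (w (n - 1) - w (n - 2)) in * by (unfold gap; f_equal; f_equal; lia).
  assert (u * gap w (J + P * u) <= u * (w (n - 1) - w (n - 2))) by (apply Nat.mul_le_mono_l; lia).
  assert ((n - 1 - J) * b <= (P + 1) * u * b) by (apply Nat.mul_le_mono_r; exact Hcount).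
  nia.
Qed.

End MonochromaticWave.

Lemma AW_prop_ge2 K s N : 1 <= s -> 2 <= K -> AW_prop K s N -> 2 <= N.
Proof.
  intros Hs HK HN.
  destruct (HN (fun _ => 0) ltac:(intros; simpl; lia)) as [v [[Hpos [Hinc _]] [Hle _]]].
  specialize (Hpos 0 ltac:(lia)). specialize (Hinc 0 ltac:(lia)). specialize (Hle 1 ltac:(lia)).
  simpl in *. lia.
Qed.

Lemma K_of_bounds r k : 2 <= r -> 100 * r <= k ->
  2 <= K_of r k /\ 20 * (4 * r - 2) * K_of r k <= 3 * k.
Proof.
  intros Hr Hk. unfold K_of.
  pose proof (Nat.div_mod k (10 * (4 * r - 4)) ltac:(lia)).
  pose proof (Nat.mod_upper_bound k (10 * (4 * r - 4)) ltac:(lia)).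
  set (K := k / (10 * (4 * r - 4))) in *. set (m := k mod (10 * (4 * r - 4))) in *.
  clearbody K m. nia.
Qed.

Open Scope R_scope.

Lemma nfloor_le x : INR (nfloor x) <= Rmax 0 x.
Proof.
  unfold nfloor. destruct (Z.lt_ge_cases (Int_part x) 0) as [Hneg|Hnneg].
  - replace (Z.to_nat (Int_part x)) with 0%nat by lia. apply Rmax_l.
  - rewrite INR_IZR_INZ, Znat.Z2Nat.id by lia. destruct (base_Int_part x).
    eapply Rle_trans; [eassumption|apply Rmax_r].
Qed.

Lemma ln_le_Rpower x d : 0 < d -> 0 < x -> d * ln x <= Rpower x d.
Proof.
  intros Hd Hx. unfold Rpower. pose proof (exp_ineq1_le (d * ln x)).
  pose proof (exp_pos (d * ln x)). lra.
Qed.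

Lemma Rpower_eventually_ge d A : 0 < d ->
  exists N, forall k, (N <= k)%nat -> A <= Rpower (INR k) d.
Proof.
  intros Hd. destruct (INR_unbounded (exp (A / d))) as [N HN].
  exists N. intros k Hk.
  assert (HkN : exp (A / d) < INR k) by (apply Rlt_le_trans with (INR N); [lra|apply le_INR; lia]).
  pose proof (exp_pos (A / d)).
  assert (A / d <= ln (INR k)).
  { rewrite <- (ln_exp (A / d)). apply Rlt_le, ln_increasing; lra. }
  pose proof (ln_le_Rpower (INR k) d Hd ltac:(lra)).
  assert (A = d * (A / d)) by (field; lra).
  assert (d * (A / d) <= d * ln (INR k)) by (apply Rmult_le_compat_l; lra). lra.
Qed.

Lemma t_len_le_Rpower r d : 0 < d ->
  exists C, 0 <= C /\ forall k, (1 <= k)%nat -> INR (t_len r k) <= C * Rpower (INR k) d.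
Proof.
  intros Hd. unfold t_len. cbv zeta.
  set (L := log2 (INR r ^ 2 / (INR r ^ 2 - 1))).
  set (A := (4 * INR r - 2) * (2 * INR r + 1) / L).
  set (B := (2 * INR r + 1) * (log2 (INR r) + 1) / L).
  assert (ln2 : 0 < ln 2) by (rewrite <- ln_1; apply ln_increasing; lra).
  exists (Rabs A / (d * ln 2) + Rabs B). split.
  { apply Rplus_le_le_0_compat; [|apply Rabs_pos].
    apply Rmult_le_pos; [apply Rabs_pos|]. apply Rlt_le, Rinv_0_lt_compat. nra. }
  intros k Hk. eapply Rle_trans; [apply nfloor_le|].
  assert (Hk1 : 1 <= INR k) by (apply (le_INR 1); lia).
  set (Y := Rpower (INR k) d).
  assert (HY1 : 1 <= Y).
  { unfold Y. rewrite <- (Rpower_O (INR k)) by lra. apply Rle_Rpower; lra. }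
  assert (Hln0 : 0 <= ln (INR k)).
  { rewrite <- ln_1. destruct (Rle_lt_or_eq_dec 1 (INR k) Hk1) as [h|h];
      [apply Rlt_le, ln_increasing; lra|rewrite h; lra]. }
  assert (Hlog : 0 <= log2 (INR k) <= Y / (d * ln 2)).
  { unfold log2. pose proof (ln_le_Rpower (INR k) d Hd ltac:(lra)) as Hln. fold Y in Hln.
    split; [apply Rmult_le_pos; [lra|apply Rlt_le, Rinv_0_lt_compat; lra]|].
    unfold Rdiv. rewrite Rinv_mult.
    assert (ln (INR k) <= Y * / d) by (apply Rmult_le_reg_l with d; [lra|field_simplify; lra]).
    assert (0 < / ln 2) by (apply Rinv_0_lt_compat; lra).
    assert (0 < / d) by (apply Rinv_0_lt_compat; lra). nra. }
  apply Rmax_lub.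
  - apply Rmult_le_pos; [|lra]. apply Rplus_le_le_0_compat; [|apply Rabs_pos].
    apply Rmult_le_pos; [apply Rabs_pos|]. apply Rlt_le, Rinv_0_lt_compat. nra.
  - assert (A * log2 (INR k) <= Rabs A * (Y / (d * ln 2))).
    { eapply Rle_trans; [apply Rle_abs|]. rewrite Rabs_mult, (Rabs_pos_eq (log2 _)) by lra.
      apply Rmult_le_compat_l; [apply Rabs_pos|lra]. }
    assert (B <= Rabs B * Y) by (pose proof (Rle_abs B); pose proof (Rabs_pos B); nra).
    unfold Rdiv in *. nra.
Qed.

(* With [d = min(eps,1)/8]: [u <= C k^d] and [k^d >= 3C + 3], so
   [u^2 k^(1-eps/2) + u <= 2 C^2 k^(2d) k^(1-4d) <= 3/10 k]. *)
Lemma t_len_sq_small r eps : 0 < eps -> exists k0 : nat, forall k : nat, (k0 <= k)%nat ->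
  forall u : nat, (1 <= u)%nat -> (u <= t_len r k)%nat ->
  INR u * INR u * Rpower (INR k) (1 - eps / 2) + INR u <= 3 / 10 * INR k.
Proof.
  intros He.
  set (d := Rmin eps 1 / 8).
  assert (Hd : 0 < d) by (unfold d; apply Rmin_case; lra).
  assert (Hd_eps : d <= eps / 8) by (unfold d; pose proof (Rmin_l eps 1); lra).
  assert (Hd_1 : d <= 1 / 8) by (unfold d; pose proof (Rmin_r eps 1); lra).
  destruct (t_len_le_Rpower r d Hd) as [C [HC Ht]].
  destruct (Rpower_eventually_ge d (3 * C + 3) Hd) as [N HN].
  exists (Nat.max 1 N). intros k Hk u Hu1 Hut.
  assert (Hk1 : 1 <= INR k) by (apply (le_INR 1); lia).
  set (Y := Rpower (INR k) d).
  set (Z := Rpower (INR k) (1 - 4 * d)).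
  assert (HY : 3 * C + 3 <= Y) by (apply HN; lia).
  assert (Hu : INR u <= C * Y).
  { apply Rle_trans with (INR (t_len r k)); [apply le_INR; lia|apply Ht; lia]. }
  assert (HZ1 : 1 <= Z).
  { unfold Z. rewrite <- (Rpower_O (INR k)) at 1 by lra. apply Rle_Rpower; lra. }
  assert (HX : Rpower (INR k) (1 - eps / 2) <= Z) by (unfold Z; apply Rle_Rpower; lra).
  assert (HX0 : 0 <= Rpower (INR k) (1 - eps / 2)) by (unfold Rpower; apply Rlt_le, exp_pos).
  assert (HZY : Z * (Y * Y * Y * Y) = INR k).
  { unfold Z, Y. rewrite <- !Rpower_plus.
    replace (1 - 4 * d + (d + d + d + d)) with 1 by ring. apply Rpower_1; lra. }
  assert (Hu1r : 1 <= INR u) by (apply (le_INR 1); lia).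
  assert (S1 : INR u * INR u * Rpower (INR k) (1 - eps / 2) + INR u <= 2 * (INR u * INR u) * Z)
    by nra.
  assert (S2 : INR u * INR u <= C * C * (Y * Y)) by nra.
  assert (S3 : 2 * (C * C) <= 3 / 10 * (Y * Y)) by nra.
  assert (S4 : 2 * (INR u * INR u) * Z <= 2 * (C * C) * ((Y * Y) * Z)) by nra.
  assert (S5 : 2 * (C * C) * ((Y * Y) * Z) <= 3 / 10 * (Y * Y) * ((Y * Y) * Z)).
  { apply Rmult_le_compat_r; [|lra]. apply Rmult_le_pos; nra. }
  replace (3 / 10 * (Y * Y) * ((Y * Y) * Z)) with (3 / 10 * (Z * (Y * Y * Y * Y))) in S5 by ring.
  rewrite HZY in S5. lra.
Qed.

Lemma gap_bound_of_counts (k m b u G : nat) (X : R) : (1 <= u)%nat -> 0 <= X ->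
  INR u * INR u * X + INR u <= 3 / 10 * INR k ->
  (6 * k <= 20 * m)%nat -> (m * b <= u * u * G + u * b)%nat ->
  INR b * X <= INR G.
Proof.
  intros Hu HX Hsmall Hkm Hmb.
  assert (Hcount : (6 * k * b <= 20 * (u * u * G + u * b))%nat) by nia.
  apply le_INR in Hcount. rewrite !mult_INR, !plus_INR, !mult_INR in Hcount.
  replace (INR 6) with 6 in Hcount by (simpl; ring).
  replace (INR 20) with 20 in Hcount by (simpl; ring).
  assert (Hu1 : 1 <= INR u) by (apply (le_INR 1); lia).
  pose proof (pos_INR b). pose proof (pos_INR G).
  assert (INR b * (INR u * INR u * X + INR u) <= INR b * (3 / 10 * INR k))
    by (apply Rmult_le_compat_l; lra).
  apply Rmult_le_reg_l with (INR u * INR u); nra.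
Qed.

Theorem lemma2p3 (r : nat) (eps : R) :
  (2 <= r)%nat -> 0 < eps ->
  exists k0 : nat, forall k : nat, (k0 <= k)%nat ->
  let K := K_of r k in
  let M := M_eps r eps k in
  let t := t_len r k in
  let n := (k / 2)%nat in
  forall (b : nat), (exists N, is_AW K (r - 1) N /\ b = (N - 1)%nat) ->
  forall (gam : nat -> nat -> nat),
    (forall i, (i < r)%nat ->
       (forall x, (1 <= x <= b)%nat -> (gam i x < r)%nat /\ gam i x <> i) /\
       ~ has_mono_wave (gam i) b K) ->
  forall (sel : nat -> nat * nat),
    (forall g, (fst (sel g) < r)%nat /\ (1 <= snd (sel g) <= r)%nat) ->
    (forall a d, (1 <= a)%nat -> (b < d)%nat -> (a + (t - 1) * d <= M)%nat ->
       good_AP r b M sel t a d) ->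
  forall w : nat -> nat, is_wave n w ->
    (forall i, (i < n)%nat -> (w i <= M)%nat) ->
    (forall i, (i < n)%nat -> colour r b gam sel (w i) = colour r b gam sel (w 0%nat)) ->
    INR b * Rpower (INR k) (1 - eps / 2) <= INR (w (n - 1)%nat - w (n - 2)%nat).
Proof.
  intros Hr Heps. destruct (t_len_sq_small r eps Heps) as [k1 Hk1].
  exists (Nat.max k1 (100 * r)).
  intros k Hk K M t n b Hb gam Hgam sel Hsel HAP w Hw HwM Hcol.
  destruct (K_of_bounds r k Hr ltac:(lia)) as [HK2 HK3]. fold K in HK2, HK3.
  assert (Hb1 : (1 <= b)%nat).
  { destruct Hb as [N [[HN _] ->]]. pose proof (AW_prop_ge2 K (r - 1) N ltac:(lia) HK2 HN). lia. }
  assert (Hsel' : forall g, (fst (sel g) < r)%nat) by (intro; apply Hsel).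
  assert (Hn : (2 * n <= k <= 2 * n + 1)%nat).
  { unfold n. pose proof (Nat.div_mod k 2 ltac:(lia)). pose proof (Nat.mod_upper_bound k 2 ltac:(lia)). lia. }
  destruct (exists_large_gap r b K gam sel Hr Hb1 Hgam Hsel' n w Hw Hcol ltac:(lia) ltac:(nia))
    as [J [HJ HgapJ]].
  pose proof (last_gap_bound r b K gam sel Hr Hb1 Hgam n w Hw Hcol t M HwM HAP J HgapJ ltac:(nia)).
  pose proof (AP_length_ge2 r b K gam sel Hr Hb1 Hgam n w Hw Hcol t M HwM HAP ltac:(nia)).
  apply (gap_bound_of_counts k (n - 1 - J) b (t - 1)).
  - lia.
  - unfold Rpower. apply Rlt_le, exp_pos.
  - apply Hk1; unfold t; lia.
  - nia.
  - assumption.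
Qed.
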